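(* Let $\mathbb{K}\in\{\mathbb{R},\mathbb{C}\}$, $\mathbf{R}_U\in\mathbb{K}^{n\times n}$ self-adjoint positive definite, $U:=\mathbb{K}^n$ with $\langle\mathbf{x},\mathbf{y}\rangle_U:=\langle\mathbf{R}_U\mathbf{x},\mathbf{y}\rangle$, norm $\|\cdot\|_U$, dual norm $\|\mathbf{y}\|_{U'}:=\langle\mathbf{y},\mathbf{R}_U^{-1}\mathbf{y}\rangle^{1/2}$. Fix $\mu$, an invertible $\mathbf{A}(\mu)\in\mathbb{K}^{n\times n}$, $\mathbf{b}(\mu),\mathbf{l}(\mu)\in\mathbb{K}^n$, $\mathbf{u}(\mu):=\mathbf{A}(\mu)^{-1}\mathbf{b}(\mu)$, $s(\mu):=\langle\mathbf{l}(\mu),\mathbf{u}(\mu)\rangle$, and arbitrary vectors $\mathbf{u}_r(\mu),\mathbf{u}_r^{\mathrm{du}}(\mu)\in U$. Let $\mathbf{r}(\mathbf{x};\mu):=\mathbf{b}(\mu)-\mathbf{A}(\mu)\mathbf{x}$, $\mathbf{r}^{\mathrm{du}}(\mathbf{x};\mu):=-\mathbf{l}(\mu)-\mathbf{A}(\mu)^{\mathrm{H}}\mathbf{x}$, $s_r(\mu):=\langle\mathbf{l}(\mu),\mathbf{u}_r(\mu)\rangle$, let $\mathbf{\Theta}\in\mathbb{K}^{k\times n}$ and $$s_r^{\mathrm{spd}}(\mu):=s_r(\mu)-\langle\mathbf{\Theta}\mathbf{u}_r^{\mathrm{du}}(\mu),\mathbf{\Theta}\mathbf{R}_U^{-1}\mathbf{r}(\mathbf{u}_r(\mu);\mu)\rangle.$$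 Let $\eta(\mu)>0$ satisfy $\eta(\mu)\le\min_{\mathbf{x}\in U\setminus\{\mathbf{0}\}}\|\mathbf{A}(\mu)\mathbf{x}\|_{U'}/\|\mathbf{x}\|_U$. If for some $\varepsilon\in[0,1)$, $|\langle\mathbf{x},\mathbf{y}\rangle_U-\langle\mathbf{\Theta}\mathbf{x},\mathbf{\Theta}\mathbf{y}\rangle|\le\varepsilon\|\mathbf{x}\|_U\|\mathbf{y}\|_U$ for all $\mathbf{x},\mathbf{y}\in\mathrm{span}\{\mathbf{u}_r^{\mathrm{du}}(\mu),\mathbf{R}_U^{-1}\mathbf{r}(\mathbf{u}_r(\mu);\mu)\}$, then $$|s(\mu)-s_r^{\mathrm{spd}}(\mu)|\le\frac{\|\mathbf{r}(\mathbf{u}_r(\mu);\mu)\|_{U'}}{\eta(\mu)}\Big((1+\varepsilon)\|\mathbf{r}^{\mathrm{du}}(\mathbf{u}_r^{\mathrm{du}}(\mu);\mu)\|_{U'}+\varepsilon\|\mathbf{l}(\mu)\|_{U'}\Big).$$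
   Context: $\langle\mathbf{x},\mathbf{y}\rangle=\mathbf{x}^{\mathrm{H}}\mathbf{y}$ is the canonical inner product; $\mathbf{M}^{\mathrm{H}}$ is the (conjugate) transpose. *)

(* The scalar field K is modelled inside an arbitrary
   numClosedFieldType C (e.g. C = complex R for R : realType, giving K = C,
   or the real subfield of C, giving K = R).  The boolean [realK] selects
   K = real elements of C (realK = true) or K = C (realK = false). *)
From HB Require Import structures.
From mathcomp Require Import all_boot all_order all_algebra.
Set Implicit Arguments. Unset Strict Implicit. Unset Printing Implicit Defensive.
Import Order.TTheory GRing.Theory Num.Theory.
Local Open Scope ring_scope.

Section Defs.
Variable C : numClosedFieldType.

Definition inK (realK : bool) (c : C) : bool := realK ==> (c \is Num.real).

Definition mxInK (realK : bool) m p (M : 'M[C]_(m, p)) : Prop :=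
  forall i j, inK realK (M i j).

Definition dotp n (x y : 'cV[C]_n) : C := \sum_(i < n) (x i 0)^* * y i 0.

Definition adjmx m p (M : 'M[C]_(m, p)) : 'M[C]_(p, m) := map_mx Num.conj M^T.

Definition selfadjoint n (M : 'M[C]_n) : Prop := adjmx M = M.

Definition posdef (realK : bool) n (M : 'M[C]_n) : Prop :=
  forall x : 'cV[C]_n, mxInK realK x -> x != 0 -> 0 < dotp (M *m x) x.

Definition dotU n (RU : 'M[C]_n) (x y : 'cV[C]_n) : C := dotp (RU *m x) y.
Definition normU n (RU : 'M[C]_n) (x : 'cV[C]_n) : C := sqrtC (dotU RU x x).
Definition normUd n (RU : 'M[C]_n) (y : 'cV[C]_n) : C :=
  sqrtC (dotp y (invmx RU *m y)).

Definition inspan2 (realK : bool) n (v w x : 'cV[C]_n) : Prop :=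
  exists a b, [/\ inK realK a, inK realK b & x = a *: v + b *: w].

Definition resid n (A : 'M[C]_n) (b x : 'cV[C]_n) : 'cV[C]_n := b - A *m x.
Definition resid_du n (A : 'M[C]_n) (l x : 'cV[C]_n) : 'cV[C]_n :=
  - l - adjmx A *m x.
End Defs.

(* With e := u - u_r we have A e = r(u_r), so the output error s - s_r equals
   <l, e> = -<r^du(u_r^du), e> - <u_r^du, R_U^{-1} r(u_r)>_U.  The first term is
   bounded by ||r^du||_{U'} ||r||_{U'} / eta through the inf-sup constant; the
   second is replaced in s_r^spd by its sketch, whose defect is at most
   eps ||u_r^du||_U ||r||_{U'} by the embedding property.  Finally
   A^H u_r^du = -r^du - l and A^H has the same inf-sup constant as A, so
   ||u_r^du||_U <= (||r^du||_{U'} + ||l||_{U'}) / eta. *)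
From HB Require Import structures.
From mathcomp Require Import all_boot all_order all_algebra ring.
Set Implicit Arguments. Unset Strict Implicit. Unset Printing Implicit Defensive.
Import Order.TTheory GRing.Theory Num.Theory.
Local Open Scope ring_scope.

Section Sesquilinear.
Variable C : numClosedFieldType.
Implicit Types (c : C) (n : nat).

Lemma dotpE n (x y : 'cV[C]_n) : dotp x y = (adjmx x *m y) 0 0.
Proof. by rewrite mxE; apply: eq_bigr => i _; rewrite !mxE. Qed.

Lemma adjmxM m n p (M : 'M[C]_(m, n)) (N : 'M[C]_(n, p)) :
  adjmx (M *m N) = adjmx N *m adjmx M.
Proof. by rewrite /adjmx trmx_mul map_mxM. Qed.

Lemma adjmxK m n (M : 'M[C]_(m, n)) : adjmx (adjmx M) = M.
Proof. by apply/matrixP => i j; rewrite !mxE conjCK. Qed.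

Lemma dotp_adjmx m n (M : 'M[C]_(m, n)) x y : dotp (M *m x) y = dotp x (adjmx M *m y).
Proof. by rewrite !dotpE adjmxM mulmxA. Qed.

Lemma conj_dotp n (x y : 'cV[C]_n) : (dotp x y)^* = dotp y x.
Proof.
by rewrite /dotp rmorph_sum; apply: eq_bigr => i _; rewrite rmorphM /= conjCK mulrC.
Qed.

Lemma dotp0l n (x : 'cV[C]_n) : dotp 0 x = 0.
Proof. by rewrite /dotp big1 // => i _; rewrite mxE rmorph0 mul0r. Qed.

Lemma dotp0r n (x : 'cV[C]_n) : dotp x 0 = 0.
Proof. by rewrite /dotp big1 // => i _; rewrite mxE mulr0. Qed.

Lemma dotpDl n (x y z : 'cV[C]_n) : dotp (x + y) z = dotp x z + dotp y z.
Proof. by rewrite /dotp -big_split; apply: eq_bigr => i _; rewrite mxE rmorphD mulrDl. Qed.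

Lemma dotpDr n (x y z : 'cV[C]_n) : dotp x (y + z) = dotp x y + dotp x z.
Proof. by rewrite /dotp -big_split; apply: eq_bigr => i _; rewrite mxE mulrDr. Qed.

Lemma dotpZl n c (x y : 'cV[C]_n) : dotp (c *: x) y = c^* * dotp x y.
Proof. by rewrite /dotp mulr_sumr; apply: eq_bigr => i _; rewrite mxE rmorphM mulrA. Qed.

Lemma dotpZr n c (x y : 'cV[C]_n) : dotp x (c *: y) = c * dotp x y.
Proof. by rewrite /dotp mulr_sumr; apply: eq_bigr => i _; rewrite mxE mulrCA. Qed.

Lemma dotpNl n (x y : 'cV[C]_n) : dotp (- x) y = - dotp x y.
Proof. by rewrite -scaleN1r dotpZl rmorphN1 mulN1r. Qed.

End Sesquilinear.

Section ScalarField.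
Variables (C : numClosedFieldType) (realK : bool).

Lemma inKP (c : C) : reflect (realK -> c^* = c) (inK realK c).
Proof.
rewrite /inK; case: realK => /=; last by left.
by apply: (iffP idP) => [/CrealP -> | /(_ isT)/CrealP].
Qed.

Lemma mxInKP m p (M : 'M[C]_(m, p)) :
  mxInK realK M <-> (realK -> map_mx Num.conj M = M).
Proof.
split=> [MK rK | MK i j].
  by apply/matrixP => i j; rewrite mxE; move/inKP: (MK i j) => ->.
by apply/inKP => rK; rewrite -[in RHS](MK rK) mxE.
Qed.

Lemma inspan2_l n (v w : 'cV[C]_n) : inspan2 realK v w v.
Proof.
by exists 1, 0; split; [apply/inKP; rewrite rmorph1 | apply/inKP; rewrite rmorph0 |
  rewrite scale1r scale0r addr0].
Qed.

Lemma inspan2_r n (v w : 'cV[C]_n) : inspan2 realK v w w.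
Proof.
by exists 0, 1; split; [apply/inKP; rewrite rmorph0 | apply/inKP; rewrite rmorph1 |
  rewrite scale1r scale0r add0r].
Qed.

Lemma mxInK0 m p : mxInK realK (0 : 'M[C]_(m, p)).
Proof. by apply/mxInKP => _; rewrite map_mx0. Qed.

Lemma mxInKD m p (M N : 'M[C]_(m, p)) :
  mxInK realK M -> mxInK realK N -> mxInK realK (M + N).
Proof. by move=> /mxInKP MK /mxInKP NK; apply/mxInKP => rK; rewrite map_mxD MK ?NK. Qed.

Lemma mxInKN m p (M : 'M[C]_(m, p)) : mxInK realK M -> mxInK realK (- M).
Proof. by move=> /mxInKP MK; apply/mxInKP => rK; rewrite map_mxN MK. Qed.

Lemma mxInKB m p (M N : 'M[C]_(m, p)) :
  mxInK realK M -> mxInK realK N -> mxInK realK (M - N).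
Proof. by move=> MK NK; apply: mxInKD => //; apply: mxInKN. Qed.

Lemma mxInKZ m p c (M : 'M[C]_(m, p)) :
  inK realK c -> mxInK realK M -> mxInK realK (c *: M).
Proof.
by move=> /inKP cK /mxInKP MK; apply/mxInKP => rK; rewrite map_mxZ /= MK ?cK.
Qed.

Lemma mxInKM m p q (M : 'M[C]_(m, p)) (N : 'M[C]_(p, q)) :
  mxInK realK M -> mxInK realK N -> mxInK realK (M *m N).
Proof. by move=> /mxInKP MK /mxInKP NK; apply/mxInKP => rK; rewrite map_mxM MK ?NK. Qed.

Lemma mxInK_adjmx m p (M : 'M[C]_(m, p)) : mxInK realK M -> mxInK realK (adjmx M).
Proof.
by move=> /mxInKP MK; apply/mxInKP => rK; rewrite /adjmx -map_trmx MK // -map_trmx MK.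
Qed.

Lemma mxInK_invmx m (M : 'M[C]_m) : mxInK realK M -> mxInK realK (invmx M).
Proof. by move=> /mxInKP MK; apply/mxInKP => rK; rewrite map_invmx MK. Qed.

Lemma mxInK_resid n (A : 'M[C]_n) b x :
  mxInK realK A -> mxInK realK b -> mxInK realK x -> mxInK realK (resid A b x).
Proof. by move=> AK bK xK; apply: mxInKB => //; apply: mxInKM. Qed.

Lemma mxInK_resid_du n (A : 'M[C]_n) l x :
  mxInK realK A -> mxInK realK l -> mxInK realK x -> mxInK realK (resid_du A l x).
Proof.
by move=> AK lK xK; apply: mxInKB; [apply: mxInKN | apply: mxInKM => //; apply: mxInK_adjmx].
Qed.

Lemma dotp_inK n (x y : 'cV[C]_n) :
  mxInK realK x -> mxInK realK y -> inK realK (dotp x y).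
Proof. by move=> xK yK; rewrite dotpE; apply: mxInKM => //; apply: mxInK_adjmx. Qed.

End ScalarField.

Section EnergyNorm.
Variables (C : numClosedFieldType) (realK : bool) (n : nat) (RU : 'M[C]_n).
Hypotheses (RUK : mxInK realK RU) (RU_sa : selfadjoint RU) (RU_pd : posdef realK RU).
Implicit Types x y z : 'cV[C]_n.

(* When realK holds, posdef only tests real vectors; the kernel of the real
   matrix RU is spanned by real vectors because kermx commutes with conjugation. *)
Lemma posdef_unitmx : RU \in unitmx.
Proof.
apply: contraT; rewrite -row_free_unit -kermx_eq0 => ker_nz.
have [K [KRU KK /matrix0Pn[i [j Kij]]]] :
    exists K : 'M_n, [/\ K *m RU = 0, mxInK realK K & K != 0].
  exists (kermx RU); split=> //; first exact: mulmx_ker.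
  by move/mxInKP: RUK => RUr; apply/mxInKP => rK; rewrite map_kermx RUr.
pose x := adjmx (row i K).
have xK : mxInK realK x by apply: mxInK_adjmx => a b; rewrite mxE; apply: KK.
have x_nz : x != 0.
  by apply/eqP => /matrixP/(_ j 0); rewrite !mxE => /eqP; rewrite conjC_eq0 (negPf Kij).
have RUx : RU *m x = 0 by rewrite -[in LHS]RU_sa -adjmxM -row_mul KRU row0 /adjmx trmx0 map_mx0.
by have := RU_pd xK x_nz; rewrite RUx dotp0l ltxx.
Qed.

Lemma dotU_ge0 x : mxInK realK x -> 0 <= dotU RU x x.
Proof.
move=> xK; have [->|x_nz] := eqVneq x 0; first by rewrite /dotU mulmx0 dotp0l.
exact: ltW (RU_pd xK x_nz).
Qed.

Lemma conj_dotU x y : (dotU RU x y)^* = dotU RU y x.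
Proof. by rewrite /dotU conj_dotp dotp_adjmx RU_sa. Qed.

Lemma dotp_mulmxr x y : dotp x (RU *m y) = dotU RU x y.
Proof. by rewrite /dotU -{1}RU_sa -dotp_adjmx. Qed.

Lemma normr_dotU_le x y : mxInK realK x -> mxInK realK y ->
  `|dotU RU x y| <= normU RU x * normU RU y.
Proof.
move=> xK yK; have xx_ge0 := dotU_ge0 xK; have yy_ge0 := dotU_ge0 yK.
have CS2 : `|dotU RU x y| ^+ 2 <= dotU RU x x * dotU RU y y.
  have [-> | y_nz] := eqVneq y 0.
    by rewrite /dotU !dotp0r normr0 expr0n mulr0.
  have yy_gt0 : 0 < dotU RU y y := RU_pd yK y_nz.
  pose w := dotU RU y y *: x - dotU RU y x *: y.
  have wK : mxInK realK w.
    by apply: mxInKB; apply: mxInKZ => //; apply: dotp_inK => //; apply: mxInKM.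
  have := dotU_ge0 wK; rewrite /w -scaleNr /dotU mulmxDr -!scalemxAr.
  rewrite dotpDl !dotpZl !dotpDr !dotpZr -!/(dotU RU _ _) -(conj_dotU x y).
  rewrite (conj_Creal (gtr0_real yy_gt0)) rmorphN.
  set p := dotU RU x y; set q := dotU RU y y; set r := dotU RU x x.
  (* the expansion of ||w||_U^2 is q (q r - |p|^2) *)
  move=> w_ge0; rewrite normCK -subr_ge0 -(pmulr_rge0 _ yy_gt0).
  set E := (X in 0 <= X) in w_ge0.
  by have -> : q * (r * q - p * p^*) = E by rewrite /E; ring.
rewrite /normU -sqrtCM ?nnegrE // -[X in X <= _](sqrCK (normr_ge0 _)).
by rewrite ler_sqrtC ?nnegrE ?exprn_ge0 ?mulr_ge0.
Qed.

Lemma normU0 : normU RU 0 = 0.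
Proof. by rewrite /normU /dotU mulmx0 dotp0l sqrtC0. Qed.

Lemma normU_ge0 x : mxInK realK x -> 0 <= normU RU x.
Proof. by move=> xK; rewrite sqrtC_ge0 dotU_ge0. Qed.

Lemma normU_gt0 x : mxInK realK x -> x != 0 -> 0 < normU RU x.
Proof. by move=> xK x_nz; rewrite sqrtC_gt0 RU_pd. Qed.

Lemma normUdE y : normUd RU y = normU RU (invmx RU *m y).
Proof. by rewrite /normUd /normU /dotU mulKVmx ?posdef_unitmx. Qed.

Lemma normUd_mulmx x : normUd RU (RU *m x) = normU RU x.
Proof. by rewrite /normUd /normU /dotU mulKmx ?posdef_unitmx. Qed.

Lemma normUd_ge0 y : mxInK realK y -> 0 <= normUd RU y.
Proof.
move=> yK; rewrite normUdE; exact: normU_ge0 (mxInKM (mxInK_invmx RUK) yK).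
Qed.

Lemma normr_dotp_le y z : mxInK realK y -> mxInK realK z ->
  `|dotp y z| <= normUd RU y * normU RU z.
Proof.
move=> yK zK; rewrite normUdE -[y in dotp y](mulKVmx posdef_unitmx y).
exact: normr_dotU_le (mxInKM (mxInK_invmx RUK) yK) zK.
Qed.

End EnergyNorm.

Section InfSup.
Variables (C : numClosedFieldType) (realK : bool) (n : nat) (RU A : 'M[C]_n) (eta : C).
Hypotheses (RUK : mxInK realK RU) (RU_sa : selfadjoint RU) (RU_pd : posdef realK RU).
Hypotheses (AK : mxInK realK A) (A_unit : A \in unitmx) (eta_gt0 : 0 < eta).
Hypothesis infsup : forall x : 'cV[C]_n, mxInK realK x -> x != 0 ->
  eta <= normUd RU (A *m x) / normU RU x.

Lemma normU_infsup x : mxInK realK x -> normU RU x * eta <= normUd RU (A *m x).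
Proof.
move=> xK; have [-> | x_nz] := eqVneq x 0.
  by rewrite normU0 mul0r mulmx0 (normUd_ge0 RUK RU_sa RU_pd (@mxInK0 _ _ _ _)).
by rewrite mulrC -ler_pdivlMr ?(normU_gt0 RU_pd) // infsup.
Qed.

(* Test A^H v against z := A^-1 R_U v: then ||v||_U^2 = <A^H v, z> and
   eta ||z||_U <= ||R_U v||_{U'} = ||v||_U. *)
Lemma normU_infsup_adjmx v c : mxInK realK v -> 0 <= c ->
  (forall z, mxInK realK z -> `|dotp (adjmx A *m v) z| <= c * normU RU z) ->
  normU RU v * eta <= c.
Proof.
move=> vK c_ge0 bound; have [-> | v_nz] := eqVneq v 0; first by rewrite normU0 mul0r.
have v_gt0 := normU_gt0 RU_pd vK v_nz.
pose z := invmx A *m (RU *m v).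
have zK : mxInK realK z by apply: mxInKM; [apply: mxInK_invmx | apply: mxInKM].
have Az : A *m z = RU *m v by rewrite mulKVmx.
have z_le : normU RU z * eta <= normU RU v.
  by rewrite -(normUd_mulmx RUK RU_sa RU_pd v) -Az normU_infsup.
have v_sq : normU RU v ^+ 2 = dotp (adjmx A *m v) z.
  by rewrite /normU sqrtCK dotp_adjmx adjmxK Az dotp_mulmxr.
rewrite -(ler_pM2r v_gt0) mulrAC -expr2.
apply: le_trans (_ : c * (normU RU z * eta) <= _); last exact: ler_wpM2l.
rewrite mulrA ler_pM2r // -[_ ^+ 2]ger0_norm ?exprn_ge0 ?(normU_ge0 RU_pd) //.
by rewrite v_sq bound.
Qed.

Lemma normU_error_le b x : mxInK realK b -> mxInK realK x ->
  normU RU (invmx A *m b - x) * eta <= normUd RU (resid A b x).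
Proof.
move=> bK xK; have -> : resid A b x = A *m (invmx A *m b - x) by rewrite mulmxBr mulKVmx.
by apply: normU_infsup; apply: mxInKB => //; apply: mxInKM => //; apply: mxInK_invmx.
Qed.

Lemma normU_dual_le l x : mxInK realK l -> mxInK realK x ->
  normU RU x * eta <= normUd RU (resid_du A l x) + normUd RU l.
Proof.
move=> lK xK; have rduK := mxInK_resid_du AK lK xK.
have nUd_ge0 := normUd_ge0 RUK RU_sa RU_pd.
apply: normU_infsup_adjmx => //; first by rewrite addr_ge0 ?nUd_ge0.
move=> z zK; have -> : adjmx A *m x = - resid_du A l x - l by rewrite opprB opprK addrK.
rewrite dotpDl !dotpNl mulrDl (le_trans (ler_normB _ _)) // normrN.
by rewrite lerD ?(normr_dotp_le RUK RU_sa RU_pd).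
Qed.

End InfSup.

Lemma output_error_identity (C : numClosedFieldType) n (RU A : 'M[C]_n)
    (b l ur udu : 'cV[C]_n) :
  selfadjoint RU -> RU \in unitmx -> A \in unitmx ->
  dotp l (invmx A *m b) = dotp l ur - dotp (resid_du A l udu) (invmx A *m b - ur)
                          - dotU RU udu (invmx RU *m resid A b ur).
Proof.
move=> RU_sa RU_unit A_unit; set e := invmx A *m b - ur.
have l_eq : l = - resid_du A l udu - adjmx A *m udu.
  by rewrite /resid_du opprB opprK addrAC subrr add0r.
have Ae : A *m e = RU *m (invmx RU *m resid A b ur) by rewrite mulKVmx // mulmxBr mulKVmx.
rewrite -[in LHS](subrK ur (invmx A *m b)) -/e dotpDr [in X in dotp X e]l_eq.
by rewrite dotpDl !dotpNl dotp_adjmx adjmxK Ae dotp_mulmxr // addrC addrA.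
Qed.

Theorem proposition4p6 (C : numClosedFieldType) (realK : bool) (n k : nat)
    (RU : 'M[C]_n) (A : 'M[C]_n) (b l ur udu : 'cV[C]_n)
    (Theta : 'M[C]_(k, n)) (eta eps : C) :
  mxInK realK RU -> selfadjoint RU -> posdef realK RU ->
  mxInK realK A -> A \in unitmx ->
  mxInK realK b -> mxInK realK l -> mxInK realK ur -> mxInK realK udu ->
  mxInK realK Theta ->
  0 < eta ->
  (forall x : 'cV[C]_n, mxInK realK x -> x != 0 ->
     eta <= normUd RU (A *m x) / normU RU x) ->
  0 <= eps -> eps < 1 ->
  (forall x y : 'cV[C]_n,
     inspan2 realK udu (invmx RU *m resid A b ur) x ->
     inspan2 realK udu (invmx RU *m resid A b ur) y ->
     `| dotU RU x y - dotp (Theta *m x) (Theta *m y) |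
       <= eps * normU RU x * normU RU y) ->
  let u := invmx A *m b in
  let s := dotp l u in
  let sr := dotp l ur in
  let srspd := sr - dotp (Theta *m udu) (Theta *m (invmx RU *m resid A b ur)) in
  `| s - srspd |
    <= normUd RU (resid A b ur) / eta *
       ((1 + eps) * normUd RU (resid_du A l udu) + eps * normUd RU l).
Proof.
move=> RUK RU_sa RU_pd AK A_unit bK lK urK uduK _ eta_gt0 infsup eps_ge0 _ embed /=.
have RU_unit := posdef_unitmx RUK RU_sa RU_pd.
have nUd_ge0 := normUd_ge0 RUK RU_sa RU_pd.
rewrite (output_error_identity b l ur udu RU_sa RU_unit A_unit).
set r := resid A b ur; set rdu := resid_du A l udu; set e := invmx A *m b - ur.
set w := invmx RU *m r; set T := dotp (Theta *m udu) (Theta *m w).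
have e_le : normU RU e <= normUd RU r / eta.
  by rewrite ler_pdivlMr // (normU_error_le RUK RU_sa RU_pd AK A_unit infsup).
have udu_le : normU RU udu <= (normUd RU rdu + normUd RU l) / eta.
  by rewrite ler_pdivlMr // (normU_dual_le RUK RU_sa RU_pd AK A_unit eta_gt0 infsup).
have D_le : `|dotU RU udu w - T| <= eps * normU RU udu * normUd RU r.
  by rewrite (normUdE RUK RU_sa RU_pd) embed //; [apply: inspan2_l | apply: inspan2_r].
have -> : dotp l ur - dotp rdu e - dotU RU udu w - (dotp l ur - T)
          = - dotp rdu e - (dotU RU udu w - T) by ring.
have rK := mxInK_resid AK bK urK; have rduK := mxInK_resid_du AK lK uduK.
have eK : mxInK realK e by apply: mxInKB => //; apply: mxInKM => //; apply: mxInK_invmx.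
rewrite (le_trans (ler_normB _ _)) // normrN.
rewrite (le_trans (lerD (normr_dotp_le RUK RU_sa RU_pd rduK eK) D_le)) //.
rewrite [leRHS](_ : _ = normUd RU rdu * (normUd RU r / eta)
                    + eps * ((normUd RU rdu + normUd RU l) / eta) * normUd RU r); last by ring.
by rewrite lerD ?ler_wpM2r ?ler_wpM2l ?nUd_ge0.
Qed.
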